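(* Let $\mathbb{A}$ be a 2-category and $p:e\to b$ a 1-cell such that $\mathbb{A}$ has the two-dimensional cokernel diagram of $p$, a right Kan extension $(t,\gamma)$ of $p$ along $p$ exists, and it is preserved by $\delta^0:b\to b\uparrow_pb$. Let $\ell:b\uparrow_pb\to b$ be the unique 1-cell with $\ell\delta^0=\mathrm{id}_b$, $\ell\delta^1=t$, $\mathrm{id}_\ell\ast\alpha=\gamma$, and let $\bar\ell:b\uparrow_pb\uparrow_pb\to b$ be the unique 1-cell with $\bar\ell D^0=\ell$ and $\bar\ell D^2=t\ell$. Then $\bar\ell D^1$ is the unique 1-cell $k:b\uparrow_pb\to b$ such that $k\delta^1=tt$, $k\delta^0=\mathrm{id}_b$ and $\mathrm{id}_k\ast\alpha=\gamma\cdot(\mathrm{id}_t\ast\gamma)$.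
   Context: A 2-category is a $\mathbf{Cat}$-enriched category; composition of 1-cells is juxtaposition, vertical composition of 2-cells is $\cdot$, horizontal composition is $\ast$, $\mathrm{id}_f$ is the identity 2-cell on $f$. Opcomma object of $p$ along itself: an object $b\uparrow_p b$ with 1-cells $\delta^0,\delta^1:b\to b\uparrow_p b$ and a 2-cell $\alpha:\delta^1p\Rightarrow\delta^0p$ such that for every object $y$ the functor $h\mapsto(h\delta^0,h\delta^1,\mathrm{id}_h\ast\alpha)$, $\xi\mapsto(\xi\ast\mathrm{id}_{\delta^0},\xi\ast\mathrm{id}_{\delta^1})$ is an isomorphism from $\mathbb{A}(b\uparrow_p b,y)$ onto the category of triples $(h_0,h_1:b\to y,\ \beta:h_1p\Rightarrow h_0p)$ with morphisms pairs of 2-cells $(\xi_0:h_0\Rightarrow h_0',\xi_1:h_1\Rightarrow h_1')$ satisfying $(\xi_0\ast\mathrm{id}_p)\cdot\beta=\beta'\cdot(\xi_1\ast\mathrm{id}_p)$. Two-dimensional pushout of a span $f_0:c\to c_0$, $f_1:c\to c_1$: an object $P$ with $q_0:c_0\to P$, $q_1:c_1\to P$, $q_0f_0=q_1f_1$, such that for every $y$, $k\mapsto(kq_0,kq_1)$ is an isomorphism from $\mathbb{A}(P,y)$ onto the category of pairs $(k_0,k_1)$ with $k_0f_0=k_1f_1$, whose morphisms are pairs of 2-cells $(\xi_0,\xi_1)$ with $\xi_0\ast\mathrm{id}_{f_0}=\xi_1\ast\mathrm{id}_{f_1}$. $\mathbb{A}$ has the two-dimensional cokernel diagram of $p$ if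 it has an opcomma object $b\uparrow_p b$ of $p$ along itself and a two-dimensional pushout $b\uparrow_pb\uparrow_pb$ of the span $(\delta^0,\delta^1)$, with 1-cells $D^0,D^2:b\uparrow_pb\to b\uparrow_pb\uparrow_pb$ satisfying $D^2\delta^0=D^0\delta^1$. Then $D^1:b\uparrow_pb\to b\uparrow_pb\uparrow_pb$ denotes the unique 1-cell with $D^1\delta^1=D^2\delta^1$, $D^1\delta^0=D^0\delta^0$ and $\mathrm{id}_{D^1}\ast\alpha=(\mathrm{id}_{D^0}\ast\alpha)\cdot(\mathrm{id}_{D^2}\ast\alpha)$. Right Kan extension of $f:z\to y$ along $g:z\to x$: a pair $(r:x\to y,\gamma:rg\Rightarrow f)$ such that for each $k:x\to y$, $\beta\mapsto\gamma\cdot(\beta\ast\mathrm{id}_g)$ is a bijection from 2-cells $k\Rightarrow r$ to 2-cells $kg\Rightarrow f$. A 1-cell $d:y\to y'$ preserves it if $(dr,\mathrm{id}_d\ast\gamma)$ is a right Kan extension of $df$ along $g$. *)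

(* Strict 2-categories (Cat-enriched categories) presented in the single-sorted,
   essentially algebraic style: one type of objects, one type of 1-cells with
   domain/codomain, one type of 2-cells with source/target 1-cells.  Operations
   are total functions, and the axioms are imposed under composability hypotheses.
   This avoids dependent-type transports while being equivalent to a Cat-enriched
   category. *)

Record TwoCat := {
  Ob : Type; Mor : Type; Cell : Type;
  dom : Mor -> Ob; cod : Mor -> Ob;
  idm : Ob -> Mor;
  comp : Mor -> Mor -> Mor;            (* comp g f = g f  (first f, then g) *)
  src : Cell -> Mor; tgt : Cell -> Mor;
  id2 : Mor -> Cell;
  vcomp : Cell -> Cell -> Cell;        (* vcomp b a = b . a  (first a) *)
  hcomp : Cell -> Cell -> Cell;        (* hcomp b a = b * a, a on the right (first) *)
  dom_idm : forall a, dom (idm a) = a;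
  cod_idm : forall a, cod (idm a) = a;
  dom_comp : forall f g, cod f = dom g -> dom (comp g f) = dom f;
  cod_comp : forall f g, cod f = dom g -> cod (comp g f) = cod g;
  comp_idl : forall f, comp (idm (cod f)) f = f;
  comp_idr : forall f, comp f (idm (dom f)) = f;
  comp_assoc : forall f g h, cod f = dom g -> cod g = dom h ->
      comp h (comp g f) = comp (comp h g) f;
  dom_src_tgt : forall a, dom (src a) = dom (tgt a);
  cod_src_tgt : forall a, cod (src a) = cod (tgt a);
  src_id2 : forall f, src (id2 f) = f;
  tgt_id2 : forall f, tgt (id2 f) = f;
  src_vcomp : forall a b, tgt a = src b -> src (vcomp b a) = src a;
  tgt_vcomp : forall a b, tgt a = src b -> tgt (vcomp b a) = tgt b;
  vcomp_idl : forall a, vcomp (id2 (tgt a)) a = a;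
  vcomp_idr : forall a, vcomp a (id2 (src a)) = a;
  vcomp_assoc : forall a b c, tgt a = src b -> tgt b = src c ->
      vcomp c (vcomp b a) = vcomp (vcomp c b) a;
  src_hcomp : forall a b, cod (src a) = dom (src b) ->
      src (hcomp b a) = comp (src b) (src a);
  tgt_hcomp : forall a b, cod (src a) = dom (src b) ->
      tgt (hcomp b a) = comp (tgt b) (tgt a);
  hcomp_id2 : forall f g, cod f = dom g -> hcomp (id2 g) (id2 f) = id2 (comp g f);
  interchange : forall a a' b b', tgt a = src a' -> tgt b = src b' ->
      cod (src a) = dom (src b) ->
      hcomp (vcomp b' b) (vcomp a' a) = vcomp (hcomp b' a') (hcomp b a);
  hcomp_idl : forall a, hcomp (id2 (idm (cod (src a)))) a = a;
  hcomp_idr : forall a, hcomp a (id2 (idm (dom (src a)))) = a;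
  hcomp_assoc : forall a b c, cod (src a) = dom (src b) -> cod (src b) = dom (src c) ->
      hcomp c (hcomp b a) = hcomp (hcomp c b) a
}.

Arguments dom {_} _. Arguments cod {_} _. Arguments idm {_} _.
Arguments comp {_} _ _. Arguments src {_} _. Arguments tgt {_} _.
Arguments id2 {_} _. Arguments vcomp {_} _ _. Arguments hcomp {_} _ _.

Section Defs.
Variable C : TwoCat.

Definition hom1 (f : Mor C) (a b : Ob C) : Prop := dom f = a /\ cod f = b.
Definition cell2 (al : Cell C) (f g : Mor C) : Prop := src al = f /\ tgt al = g.

(* Opcomma object (O, d0, d1, al) of p : e -> b along itself,
   al : d1 p => d0 p; the comparison functor A(O,y) -> triples is an
   isomorphism of categories (bijective on objects, fully faithful). *)
Definition is_opcomma (e b : Ob C) (p : Mor C) (O : Ob C) (d0 d1 : Mor C)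
    (al : Cell C) : Prop :=
  hom1 p e b /\ hom1 d0 b O /\ hom1 d1 b O /\
  cell2 al (comp d1 p) (comp d0 p) /\
  (* bijective on objects *)
  (forall (y : Ob C) (h0 h1 : Mor C) (be : Cell C),
     hom1 h0 b y -> hom1 h1 b y -> cell2 be (comp h1 p) (comp h0 p) ->
     exists! h : Mor C, hom1 h O y /\ comp h d0 = h0 /\ comp h d1 = h1 /\
                        hcomp (id2 h) al = be) /\
  (* bijective on hom-sets *)
  (forall (y : Ob C) (h h' : Mor C) (xi0 xi1 : Cell C),
     hom1 h O y -> hom1 h' O y ->
     cell2 xi0 (comp h d0) (comp h' d0) -> cell2 xi1 (comp h d1) (comp h' d1) ->
     vcomp (hcomp xi0 (id2 p)) (hcomp (id2 h) al)
       = vcomp (hcomp (id2 h') al) (hcomp xi1 (id2 p)) ->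
     exists! xi : Cell C, cell2 xi h h' /\ hcomp xi (id2 d0) = xi0 /\
                          hcomp xi (id2 d1) = xi1).

Definition is_2pushout (c c0 c1 : Ob C) (f0 f1 : Mor C) (P : Ob C) (q0 q1 : Mor C)
    : Prop :=
  hom1 f0 c c0 /\ hom1 f1 c c1 /\ hom1 q0 c0 P /\ hom1 q1 c1 P /\
  comp q0 f0 = comp q1 f1 /\
  (forall (y : Ob C) (k0 k1 : Mor C),
     hom1 k0 c0 y -> hom1 k1 c1 y -> comp k0 f0 = comp k1 f1 ->
     exists! k : Mor C, hom1 k P y /\ comp k q0 = k0 /\ comp k q1 = k1) /\
  (forall (y : Ob C) (k k' : Mor C) (xi0 xi1 : Cell C),
     hom1 k P y -> hom1 k' P y ->
     cell2 xi0 (comp k q0) (comp k' q0) -> cell2 xi1 (comp k q1) (comp k' q1) ->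
     hcomp xi0 (id2 f0) = hcomp xi1 (id2 f1) ->
     exists! xi : Cell C, cell2 xi k k' /\ hcomp xi (id2 q0) = xi0 /\
                          hcomp xi (id2 q1) = xi1).

(* Two-dimensional cokernel diagram of p : opcomma object b↑b = O with
   (d0, d1, al), and a two-dimensional pushout Q of the span (d0, d1) with
   D2 paired with d0 and D0 paired with d1, so that D2 d0 = D0 d1. *)
Definition is_cokernel_diagram (e b : Ob C) (p : Mor C) (O : Ob C) (d0 d1 : Mor C)
    (al : Cell C) (Q : Ob C) (D0 D2 : Mor C) : Prop :=
  is_opcomma e b p O d0 d1 al /\ is_2pushout b O O d0 d1 Q D2 D0.

Definition is_right_kan (z x y : Ob C) (f g r : Mor C) (ga : Cell C) : Prop :=
  hom1 f z y /\ hom1 g z x /\ hom1 r x y /\ cell2 ga (comp r g) f /\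
  forall k : Mor C, hom1 k x y ->
    forall th : Cell C, cell2 th (comp k g) f ->
      exists! be : Cell C, cell2 be k r /\ vcomp ga (hcomp be (id2 g)) = th.

Definition preserves_right_kan (z x y : Ob C) (f g r : Mor C) (ga : Cell C)
    (d : Mor C) (y' : Ob C) : Prop :=
  hom1 d y y' /\ is_right_kan z x y' (comp d f) g (comp d r) (hcomp (id2 d) ga).

End Defs.

Arguments hom1 {_} _ _ _. Arguments cell2 {_} _ _ _.
Arguments is_opcomma {C} _ _ _ _ _ _ _.
Arguments is_2pushout {C} _ _ _ _ _ _ _ _.
Arguments is_cokernel_diagram {C} _ _ _ _ _ _ _ _ _ _.
Arguments is_right_kan {C} _ _ _ _ _ _ _.
Arguments preserves_right_kan {C} _ _ _ _ _ _ _ _ _.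


(* The composite ℓ̄D¹ is computed from the defining equations of D¹:
   ℓ̄D¹δ⁰ = ℓ̄D⁰δ⁰ = ℓδ⁰ = 1, ℓ̄D¹δ¹ = ℓ̄D²δ¹ = tℓδ¹ = tt, and
   ℓ̄D¹α = (ℓ̄D⁰α)·(ℓ̄D²α) = (ℓα)·(tℓα) = γ·(tγ), where the vertical composite
   makes sense because D²δ⁰ = D⁰δ¹.  Uniqueness is the one-dimensional part of
   the universal property of b↑b: a 1-cell out of it is determined by its
   composites with δ⁰, δ¹ and its whiskering with α. *)

Section TwoCategory.
Context {C : TwoCat}.

Lemma hom1_comp {f g : Mor C} {a b c : Ob C} :
  hom1 f a b -> hom1 g b c -> hom1 (comp g f) a c.
Proof.
  intros [fd fc] [gd gc].
  split; [rewrite dom_comp | rewrite cod_comp]; congruence.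
Qed.

Lemma cell2_whisker (h f g : Mor C) (a : Cell C) :
  cell2 a f g -> cod f = dom h -> cell2 (hcomp (id2 h) a) (comp h f) (comp h g).
Proof.
  intros [sa ta] Hfh.
  assert (Ha : cod (src a) = dom (src (id2 h))) by (rewrite src_id2; congruence).
  split.
  - rewrite src_hcomp, src_id2 by exact Ha; congruence.
  - rewrite tgt_hcomp, tgt_id2 by exact Ha; congruence.
Qed.

Lemma hcomp_id2_comp (g f : Mor C) (a : Cell C) :
  cod f = dom g -> cod (src a) = dom f ->
  hcomp (id2 (comp g f)) a = hcomp (id2 g) (hcomp (id2 f) a).
Proof.
  intros Hfg Ha.
  rewrite <- (hcomp_id2 C f g Hfg), (hcomp_assoc C a (id2 f) (id2 g));
    rewrite ?src_id2; congruence.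
Qed.

Lemma hcomp_id2_vcomp (h : Mor C) (a b : Cell C) :
  tgt a = src b -> cod (src a) = dom h ->
  hcomp (id2 h) (vcomp b a) = vcomp (hcomp (id2 h) b) (hcomp (id2 h) a).
Proof.
  intros Hab Ha.
  rewrite <- interchange; rewrite ?tgt_id2, ?src_id2; try congruence.
  pose proof (vcomp_idl C (id2 h)) as Hid; rewrite tgt_id2 in Hid.
  now rewrite Hid.
Qed.

Lemma opcomma_ext {e b : Ob C} {p : Mor C} {O : Ob C} {d0 d1 : Mor C} {al : Cell C}
    {y : Ob C} {h h' : Mor C} :
  is_opcomma e b p O d0 d1 al -> hom1 h O y -> hom1 h' O y ->
  comp h d0 = comp h' d0 -> comp h d1 = comp h' d1 ->
  hcomp (id2 h) al = hcomp (id2 h') al -> h = h'.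
Proof.
  intros [[_ pc] [Hd0 [Hd1 [Hal [Hobj _]]]]] Hh Hh' E0 E1 Eal.
  assert (Hbe : cell2 (hcomp (id2 h) al) (comp (comp h d1) p) (comp (comp h d0) p)).
  { destruct Hh, Hd0, Hd1, Hal.
    rewrite <- !comp_assoc by congruence.
    apply cell2_whisker; [split | rewrite cod_comp]; congruence. }
  destruct (Hobj y _ _ _ (hom1_comp Hd0 Hh) (hom1_comp Hd1 Hh) Hbe)
    as [h'' [_ Huniq]].
  transitivity h''; [symmetry |]; apply Huniq; repeat split; try apply Hh; try apply Hh';
    congruence.
Qed.

End TwoCategory.

Section CokernelDiagram.
Context {C : TwoCat} {e b O Q : Ob C} {p d0 d1 D0 D1 D2 : Mor C} {al : Cell C}.
Hypothesis Hcok : is_cokernel_diagram e b p O d0 d1 al Q D0 D2.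
Hypothesis HD1 : hom1 D1 O Q /\ comp D1 d1 = comp D2 d1 /\ comp D1 d0 = comp D0 d0 /\
  hcomp (id2 D1) al = vcomp (hcomp (id2 D0) al) (hcomp (id2 D2) al).

Lemma comp_D1_d0 {y : Ob C} {k : Mor C} :
  hom1 k Q y -> comp (comp k D1) d0 = comp (comp k D0) d0.
Proof.
  destruct Hcok as [[_ [[d0d d0c] _]] [_ [_ [_ [[D0d D0c] _]]]]].
  destruct HD1 as [[D1d D1c] [_ [E0 _]]].
  intros [kd kc].
  rewrite <- !comp_assoc by congruence; congruence.
Qed.

Lemma comp_D1_d1 {y : Ob C} {k : Mor C} :
  hom1 k Q y -> comp (comp k D1) d1 = comp (comp k D2) d1.
Proof.
  destruct Hcok as [[_ [_ [[d1d d1c] _]]] [_ [_ [[D2d D2c] _]]]].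
  destruct HD1 as [[D1d D1c] [E1 _]].
  intros [kd kc].
  rewrite <- !comp_assoc by congruence; congruence.
Qed.

Lemma whisker_comp_D1 {y : Ob C} {k : Mor C} :
  hom1 k Q y ->
  hcomp (id2 (comp k D1)) al
  = vcomp (hcomp (id2 (comp k D0)) al) (hcomp (id2 (comp k D2)) al).
Proof.
  destruct Hcok as [[[_ pc] [[d0d d0c] [[d1d d1c] [Hal _]]]]
                    [_ [_ [[D2d D2c] [[D0d D0c] [Hsq _]]]]]].
  destruct HD1 as [[D1d D1c] [_ [_ Eal]]].
  intros [kd kc].
  assert (Hsal : cod (src al) = O) by (destruct Hal as [-> _]; rewrite cod_comp; congruence).
  assert (HD2al : cell2 (hcomp (id2 D2) al) (comp D2 (comp d1 p)) (comp D2 (comp d0 p)))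
    by (apply cell2_whisker; [exact Hal | rewrite cod_comp; congruence]).
  assert (HD0al : cell2 (hcomp (id2 D0) al) (comp D0 (comp d1 p)) (comp D0 (comp d0 p)))
    by (apply cell2_whisker; [exact Hal | rewrite cod_comp; congruence]).
  destruct HD2al as [sD2 tD2], HD0al as [sD0 tD0].
  assert (Hcomposable : tgt (hcomp (id2 D2) al) = src (hcomp (id2 D0) al))
    by (rewrite tD2, sD0, !comp_assoc, Hsq by congruence; reflexivity).
  assert (HsD2al : cod (src (hcomp (id2 D2) al)) = Q).
  { rewrite sD2, cod_comp; [| rewrite cod_comp]; congruence. }
  rewrite hcomp_id2_comp, Eal, hcomp_id2_vcomp, <- !hcomp_id2_comp by congruence.
  reflexivity.
Qed.

End CokernelDiagram.

Theorem lemma4p5 (C : TwoCat) (e b O Q : Ob C)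
  (p d0 d1 D0 D1 D2 t l lb : Mor C) (al ga : Cell C)
  (Hcok : is_cokernel_diagram e b p O d0 d1 al Q D0 D2)
  (HD1 : hom1 D1 O Q /\ comp D1 d1 = comp D2 d1 /\ comp D1 d0 = comp D0 d0 /\
         hcomp (id2 D1) al = vcomp (hcomp (id2 D0) al) (hcomp (id2 D2) al))
  (Hkan : is_right_kan e b b p p t ga)
  (Hpres : preserves_right_kan e b b p p t ga d0 O)
  (Hl : hom1 l O b /\ comp l d0 = idm b /\ comp l d1 = t /\ hcomp (id2 l) al = ga)
  (Hlb : hom1 lb Q b /\ comp lb D0 = l /\ comp lb D2 = comp t l) :
  (hom1 (comp lb D1) O b /\ comp (comp lb D1) d1 = comp t t /\
   comp (comp lb D1) d0 = idm b /\
   hcomp (id2 (comp lb D1)) al = vcomp ga (hcomp (id2 t) ga)) /\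
  (forall k : Mor C, hom1 k O b -> comp k d1 = comp t t -> comp k d0 = idm b ->
     hcomp (id2 k) al = vcomp ga (hcomp (id2 t) ga) -> k = comp lb D1).
Proof.
  destruct Hl as [[ld lc] [l0 [l1 lal]]], Hlb as [Hlb [lb0 lb2]].
  pose proof Hcok as [[[_ pc] [_ [[d1d d1c] [[als _] _]]]] _].
  assert (td : dom t = b) by (rewrite <- l1, dom_comp; congruence).
  pose proof (hom1_comp (proj1 HD1) Hlb) as HlbD1.
  assert (E0 : comp (comp lb D1) d0 = idm b)
    by (rewrite (comp_D1_d0 Hcok HD1 Hlb), lb0; exact l0).
  assert (E1 : comp (comp lb D1) d1 = comp t t)
    by (rewrite (comp_D1_d1 Hcok HD1 Hlb), lb2, <- comp_assoc, l1 by congruence; reflexivity).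
  assert (Eal : hcomp (id2 (comp lb D1)) al = vcomp ga (hcomp (id2 t) ga)).
  { rewrite (whisker_comp_D1 Hcok HD1 Hlb), lb0, lb2, hcomp_id2_comp, lal; [reflexivity | |];
      rewrite ?als, ?cod_comp; congruence. }
  split; [tauto |].
  intros k Hk k1 k0 kal.
  apply (opcomma_ext (proj1 Hcok) Hk HlbD1); congruence.
Qed.
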